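(* Let $P_{\mathrm{app}}=\sum_{i=0}^na_iX^i\in K[X]$ be monic of degree $n$, and let $0<d<n$ be such that $(d,\mathrm{val}(a_d))$ is an extremal point of $\mathrm{NP}(P_{\mathrm{app}})$, with $a_j\ne0$ for some $j<d$. Let $\varphi_P$ be a Newton function of degree $n-1$ which is nondegenerate for $P_{\mathrm{app}}$, in the following sense: - $\varphi_P\ge\mathrm{NF}(P_{\mathrm{app}})$ on $[0,n-1]$; - $\varphi_P(x)>y$ for every extremal point $(x,y)$ of $\mathrm{NP}(P_{\mathrm{app}})$ with $x\le n-1$. Let $\varphi$ be as defined in the context and set $$\delta=\min_{x\in[0,n-1]}\big(\varphi_P(x)-\varphi(x)\big).$$ Assume $\delta>0$. Let $\delta P\in K_{\le n-1}[X]$ satisfy $\mathrm{val}(c_i)\ge\varphi_P(i)$ for all $0\le i\le n-1$, where $c_i$ is the coefficient of $X^i$ in $\delta P$, and put $P=P_{\mathrm{app}}+\delta P$. Then $\mathrm{NF}(P)=\mathrm{NF}(P_{\mathrm{app}})$. Let $A^{(1)}$ (resp. $A^{(1)}_{\mathrm{app}}$) be the unique monic divisor of $P$ (resp. of $P_{\mathrm{app}}$) of degree $d$ whose Newton function is $\mathrm{NF}(P_{\mathrm{app}})|_{[0,d]}-\mathrm{NF}(P_{\mathrm{app}})(d)$. Then for every $0\le i\le d-1$, the coefficient of $X^i$ in $A^{(1)}-A^{(1)}_{\mathrm{app}}$ has valuation at least $\varphi(i)-\varphi(d)+\delta$.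
   Context: $K$ is a complete discrete valuation field with valuation $\mathrm{val}:K\to\mathbb Z\cup\{+\infty\}$, normalized to be surjective. $K_{\le m}[X]$ denotes the polynomials of degree at most $m$. For $Q=\sum q_iX^i\in K[X]$ nonzero of degree $m$, $\mathrm{NF}(Q):[0,m]\to\mathbb R\cup\{+\infty\}$ is the greatest convex function with $\mathrm{NF}(Q)(i)\le\mathrm{val}(q_i)$ for all $0\le i\le m$. Its epigraph is the Newton polygon $\mathrm{NP}(Q)$, and an extremal point is a vertex of it. A Newton function of degree $m$ is a convex, piecewise affine function $[0,m]\to\mathbb R\cup\{+\infty\}$, finite at $m$, whose epigraph has extremal points with integral abscissae. Set $\lambda_0=\mathrm{NF}(P_{\mathrm{app}})(d)-\mathrm{NF}(P_{\mathrm{app}})(d-1)$. The function $\varphi:[0,+\infty)\to\mathbb R\cup\{+\infty\}$ is defined by $\varphi(x)=\mathrm{NF}(P_{\mathrm{app}})(x)$ for $x\le d$ and $\varphi(x)=\lambda_0(x-d)+\mathrm{NF}(P_{\mathrm{app}})(d)$ for $x>d$. Existence and uniqueness of the monic divisors in the statement: a polynomial whose Newton polygon has an extremal point at abscissa $d$ has a unique monic divisor of degree $d$ whose Newton function is the restriction of its own Newton function to $[0,d]$, shifted by a constant so that its value at $d$ is $0$. *)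

From HB Require Import structures.
From mathcomp Require Import all_boot all_order all_algebra.
Set Implicit Arguments. Unset Strict Implicit. Unset Printing Implicit Defensive.
Import Order.TTheory GRing.Theory Num.Theory.
Local Open Scope ring_scope.

(* ---------- Valuations: values in Z ∪ {+oo}, encoded as option int (None = +oo) *)

Definition vge (v : option int) (k : int) : bool :=
  if v is Some a then k <= a else true.

Definition oaddi (u v : option int) : option int :=
  match u, v with Some a, Some b => Some (a + b) | _, _ => None end.

Definition is_cdvf (K : fieldType) (val : K -> option int) : Prop :=
  [/\ (forall x, val x = None <-> x = 0),
      (forall x y, val (x * y) = oaddi (val x) (val y)),
      (forall x y k, vge (val x) k -> vge (val y) k -> vge (val (x + y)) k),
      (forall k : int, exists x, val x = Some k) &
      (forall u : nat -> K,
         (forall M : int, exists N, forall p q, (N <= p)%N -> (N <= q)%N ->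
             vge (val (u p - u q)) M) ->
         exists l, forall M : int, exists N, forall p, (N <= p)%N ->
             vge (val (u p - l)) M)].

(* ---------- Extended reals R ∪ {+oo}, encoded as option R (None = +oo) *)

Section Ext.
Variable R : realFieldType.

Definition ole (u v : option R) : bool :=
  match u, v with
  | _, None => true
  | None, Some _ => false
  | Some a, Some b => a <= b
  end.

Definition olt (u v : option R) : bool :=
  match u, v with
  | None, _ => false
  | Some _, None => true
  | Some a, Some b => a < b
  end.

Definition ointR (v : option int) : option R := omap (fun k : int => k%:~R) v.

Definition osub (u : option R) (c : R) : option R := omap (fun a => a - c) u.

Definition epi (m : R) (f : R -> option R) (p : R * R) : Prop :=
  0 <= p.1 <= m /\ ole (f p.1) (Some p.2).

Definition comb (t : R) (p q : R * R) : R * R :=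
  (t * p.1 + (1 - t) * q.1, t * p.2 + (1 - t) * q.2).

Definition convex_on (m : R) (f : R -> option R) : Prop :=
  forall p q t, epi m f p -> epi m f q -> 0 <= t <= 1 -> epi m f (comb t p q).

Definition extremal (m : R) (f : R -> option R) (p : R * R) : Prop :=
  epi m f p /\
  forall q r t, epi m f q -> epi m f r -> 0 < t < 1 -> p = comb t q r -> q = r.

Definition piecewise_affine (m : R) (f : R -> option R) : Prop :=
  exists s : seq R,
    [/\ path <%R 0 s, last 0 s = m &
        forall k, (k < size s)%N ->
          let a := nth 0 (0 :: s) k in let b := nth 0 s k in
          (forall x, a < x < b -> f x = None) \/
          (exists al be : R, forall x, a <= x <= b -> f x = Some (al * x + be))].

Definition newton_function (m : nat) (f : R -> option R) : Prop :=
  [/\ convex_on m%:R f,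
      piecewise_affine m%:R f,
      f m%:R != None &
      forall p, extremal m%:R f p -> exists k : nat, p.1 = k%:R].

Definition is_NF (K : fieldType) (val : K -> option int) (Q : {poly K})
    (f : R -> option R) : Prop :=
  let m := (size Q).-1 in
  [/\ convex_on m%:R f,
      (forall i : nat, (i <= m)%N -> ole (f i%:R) (ointR (val Q`_i))) &
      (forall g : R -> option R, convex_on m%:R g ->
         (forall i : nat, (i <= m)%N -> ole (g i%:R) (ointR (val Q`_i))) ->
         forall x, 0 <= x <= m%:R -> ole (g x) (f x))].

(* the function phi built from NF(P_app) =: fapp and d *)
Definition phi_ext (fapp : R -> option R) (d : nat) (x : R) : option R :=
  if x <= d%:R then fapp x
  else match fapp d%:R, fapp (d.-1)%:R with
       | Some a, Some b => Some ((a - b) * (x - d%:R) + a)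
       | _, _ => None
       end.

End Ext.

From HB Require Import structures.
From mathcomp Require Import all_boot all_order all_algebra.
From mathcomp Require Import ring lra zify.
Set Implicit Arguments. Unset Strict Implicit. Unset Printing Implicit Defensive.
Import Order.TTheory GRing.Theory Num.Theory.
Local Open Scope ring_scope.

(* Newton polygons are handled through rightmost contacts: for a slope [lam],
   the least value [mu] of [val U_k - lam k] and the largest index attaining
   it; contacts of a product add up, as in Gauss's lemma.

   [NF(Papp + dP) = NF(Papp)] because [dP] lies strictly above [NF(Papp)] at
   its vertices and weakly above it elsewhere.

   For the divisors, suppose a coefficient of [E = A - Aapp] is too small and
   let [s] be the last index minimising [val E_k - NF(Papp)(k)], the minimum
   [m0] being less than [delta]. With [lam] the slope of [NF(Papp)] on
   [[s, s + 1]], [E] has its rightmost contact of slope [lam] at [s], the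
   cofactor [B = (Papp + dP) / A] at [0], and [Aapp] beyond [s]. Writing
   [dP = E B + Aapp (B - Bapp)], the two summands have rightmost contacts at
   different indices, so [dP] has a coefficient on the line of [E B]; but that
   line lies less than [delta] above [phi], hence below [phiP] and [dP]. *)

Section Valuation.
Variables (K : fieldType) (val : K -> option int).
Hypothesis Hv : is_cdvf val.

Lemma val_eq0 x : val x = None <-> x = 0.
Proof. by case: Hv. Qed.

Lemma val0 : val 0 = None.
Proof. exact/val_eq0. Qed.

Lemma valM x y : val (x * y) = oaddi (val x) (val y).
Proof. by case: Hv. Qed.

Lemma val_add_vge x y k : vge (val x) k -> vge (val y) k -> vge (val (x + y)) k.
Proof. by case: Hv => _ _ H _ _; apply: H. Qed.

Lemma val_neq0 x : x != 0 -> exists a, val x = Some a.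
Proof.
move=> nx; case E: (val x) => [a|]; first by exists a.
by move/val_eq0: E => E; rewrite E eqxx in nx.
Qed.

Lemma val1 : val 1 = Some 0.
Proof.
have [a Ha] := val_neq0 (oner_neq0 K).
have := valM 1 1; rewrite mulr1 Ha /= => -[] H.
by congr Some; lia.
Qed.

Lemma valN1 : val (-1) = Some 0.
Proof.
have [a Ha] : exists a, val (-1) = Some a by apply: val_neq0; rewrite oppr_eq0 oner_neq0.
have := valM (-1) (-1); rewrite mulrNN mulr1 val1 Ha /= => -[] H.
by congr Some; lia.
Qed.

Lemma valN x : val (- x) = val x.
Proof. by rewrite -mulN1r valM valN1; case: (val x) => //= a; rewrite add0r. Qed.

End Valuation.

Section RealBounds.
Variables (K : fieldType) (val : K -> option int) (R : realFieldType).
Hypothesis Hv : is_cdvf val.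

Definition geR (r : R) (w : option int) := ole (Some r) (ointR R w).
Definition gtR (r : R) (w : option int) := olt (Some r) (ointR R w).

Definition vR (w : option int) : R := odflt 0 (ointR R w).

Lemma ointR_None (w : option int) : ointR R w = None -> w = None.
Proof. by case: w. Qed.

Lemma ointR_vR x : x != 0 -> ointR R (val x) = Some (vR (val x)).
Proof. by move=> /(val_neq0 Hv) [a ->]. Qed.

Lemma geR0 r : geR r (val 0).
Proof. by rewrite (val0 Hv). Qed.

Lemma gtR0 r : gtR r (val 0).
Proof. by rewrite (val0 Hv). Qed.

Lemma gtR_geR r w : gtR r w -> geR r w.
Proof. by rewrite /gtR /geR; case: w => //= a /ltW. Qed.

Lemma geR_le r1 r2 w : r1 <= r2 -> geR r2 w -> geR r1 w.
Proof. by rewrite /geR; case: w => //= a h1 h2; apply: le_trans h1 h2. Qed.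

Lemma gtR_le r1 r2 w : r1 <= r2 -> gtR r2 w -> gtR r1 w.
Proof. by rewrite /gtR; case: w => //= a h1 h2; apply: le_lt_trans h1 h2. Qed.

Lemma geR_lt r1 r2 w : r1 < r2 -> geR r2 w -> gtR r1 w.
Proof. by rewrite /gtR /geR; case: w => //= a h1 h2; apply: lt_le_trans h1 h2. Qed.

Lemma ole_geR (a : R) (u : option R) w : ole (Some a) u -> ole u (ointR R w) -> geR a w.
Proof. by rewrite /geR; case: u => [b|] //=; case: (ointR R w) => //= c; apply: le_trans. Qed.

Lemma ointR_not_gtR a r w : ointR R w = Some a -> a <= r -> ~~ gtR r w.
Proof. by rewrite /gtR => -> /=; rewrite -leNgt. Qed.

Lemma geR_add r x y : geR r (val x) -> geR r (val y) -> geR r (val (x + y)).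
Proof.
case Ex: (val x) => [a|]; last by move/(val_eq0 Hv): Ex => ->; rewrite add0r.
case Ey: (val y) => [b|]; last by move/(val_eq0 Hv): Ey => ->; rewrite addr0 Ex.
rewrite /geR /= => ha hb.
have := val_add_vge Hv (k := Order.min a b) (x := x) (y := y).
rewrite Ex Ey /= !ge_min !lexx orbT /= => /(_ isT isT).
case: (val (x + y)) => [c|] //= hc.
by case: (leP a b) hc => hab hc; [apply: le_trans ha _ | apply: le_trans hb _];
  rewrite ler_int.
Qed.

Lemma gtR_add r x y : gtR r (val x) -> gtR r (val y) -> gtR r (val (x + y)).
Proof.
case Ex: (val x) => [a|]; last by move/(val_eq0 Hv): Ex => ->; rewrite add0r.
case Ey: (val y) => [b|]; last by move/(val_eq0 Hv): Ey => ->; rewrite addr0 Ex.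
rewrite /gtR /= => ha hb.
have := val_add_vge Hv (k := Order.min a b) (x := x) (y := y).
rewrite Ex Ey /= !ge_min !lexx orbT /= => /(_ isT isT).
case: (val (x + y)) => [c|] //= hc.
by case: (leP a b) hc => hab hc; [apply: lt_le_trans ha _ | apply: lt_le_trans hb _];
  rewrite ler_int.
Qed.

Lemma geR_mul r1 r2 x y :
  geR r1 (val x) -> geR r2 (val y) -> geR (r1 + r2) (val (x * y)).
Proof.
rewrite (valM Hv) /geR; case: (val x) => [a|] //; case: (val y) => [b|] //=.
by move=> ha hb; rewrite intrD lerD.
Qed.

Lemma gtR_mull r1 r2 x y :
  gtR r1 (val x) -> geR r2 (val y) -> gtR (r1 + r2) (val (x * y)).
Proof.
rewrite (valM Hv) /geR /gtR; case: (val x) => [a|] //; case: (val y) => [b|] //=.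
by move=> ha hb; rewrite intrD ltr_leD.
Qed.

Lemma gtR_mulr r1 r2 x y :
  geR r1 (val x) -> gtR r2 (val y) -> gtR (r1 + r2) (val (x * y)).
Proof.
rewrite (valM Hv) /geR /gtR; case: (val x) => [a|] //; case: (val y) => [b|] //=.
by move=> ha hb; rewrite intrD ler_ltD.
Qed.

Lemma geR_sum (I : Type) (s : seq I) (P : pred I) (F : I -> K) r :
  (forall i, P i -> geR r (val (F i))) -> geR r (val (\sum_(i <- s | P i) F i)).
Proof.
move=> h; apply: (big_ind (fun z => geR r (val z))) => //; first exact: geR0.
by move=> a b; apply: geR_add.
Qed.

Lemma gtR_sum (I : Type) (s : seq I) (P : pred I) (F : I -> K) r :
  (forall i, P i -> gtR r (val (F i))) -> gtR r (val (\sum_(i <- s | P i) F i)).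
Proof.
move=> h; apply: (big_ind (fun z => gtR r (val z))) => //; first exact: gtR0.
by move=> a b; apply: gtR_add.
Qed.

Lemma ointR_val_add r x y : ointR R (val x) = Some r -> gtR r (val y) ->
  ointR R (val (x + y)) = Some r.
Proof.
move=> Ex hy.
have hx : geR r (val x) by rewrite /geR Ex /=.
have hxy := geR_add hx (gtR_geR hy).
have back : gtR r (val (x + y)) -> False.
  move=> gt; have := gtR_add gt (y := - y); rewrite (valN Hv) addrK => /(_ hy).
  by rewrite (negbTE (ointR_not_gtR Ex (lexx r))).
case Exy: (val (x + y)) hxy => [c|] /=; rewrite /geR ?Exy //= => hc; last first.
  by exfalso; apply: back; rewrite /gtR Exy.
case: (eqVneq (c%:~R : R) r) => [->//|ne]; exfalso; apply: back.
by rewrite /gtR Exy /= lt_neqAle eq_sym ne hc.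
Qed.

End RealBounds.

Section RightmostContact.
Variables (K : fieldType) (val : K -> option int) (R : realFieldType).
Hypothesis Hv : is_cdvf val.

(* For [w = line mu lam]: the line of slope [lam] supports the Newton polygon of
   [U] and touches it for the last time at abscissa [t]. *)
Definition rightmost_contact (U : {poly K}) (w : nat -> R) (t : nat) :=
  [/\ forall k, geR (w k) (val U`_k),
      ointR R (val U`_t) = Some (w t) &
      forall k, (t < k)%N -> gtR (w k) (val U`_k)].

Definition line (mu lam : R) (k : nat) : R := mu + lam * k%:R.

Lemma line_split (lam mu1 mu2 : R) (i j : nat) : (j <= i)%N ->
  line mu1 lam j + line mu2 lam (i - j) = line (mu1 + mu2) lam i.
Proof. by move=> h; rewrite /line natrB //; ring. Qed.

Lemma rightmost_contactM U W lam mu1 mu2 t1 t2 :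
  rightmost_contact U (line mu1 lam) t1 ->
  rightmost_contact W (line mu2 lam) t2 ->
  rightmost_contact (U * W) (line (mu1 + mu2) lam) (t1 + t2).
Proof.
move=> [U1 U2 U3] [W1 W2 W3].
have split_at (j : 'I_(_).+1) := line_split lam mu1 mu2 (ltnSE (ltn_ord j)).
split.
- move=> k; rewrite coefM; apply: (geR_sum Hv) => j _.
  by rewrite -(split_at _ j); apply: (geR_mul Hv).
- have t1_lt : (t1 < (t1 + t2).+1)%N by rewrite ltnS leq_addr.
  rewrite coefM (bigD1 (Ordinal t1_lt)) //= addKn.
  apply: (ointR_val_add Hv).
    rewrite (valM Hv) -(line_split lam mu1 mu2 (leq_addr t2 t1)) addKn.
    by move: U2 W2; case: (val U`_t1) => // a; case: (val W`_t2) => // b /= [<-] [<-];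
      rewrite intrD.
  apply: (gtR_sum Hv) => j; rewrite -val_eqE /= => nj; rewrite -(split_at _ j).
  case: (ltngtP j t1) nj => // hj _.
  + apply: (gtR_mulr Hv); first exact: U1.
    by apply: W3; have := ltn_ord j; lia.
  + by apply: (gtR_mull Hv); [apply: U3 | apply: W1].
- move=> k hk; rewrite coefM; apply: (gtR_sum Hv) => j _; rewrite -(split_at _ j).
  case: (ltnP t1 j) => hj.
  + by apply: (gtR_mull Hv); [apply: U3 | apply: W1].
  + apply: (gtR_mulr Hv); first exact: U1.
    by apply: W3; have := ltn_ord j; lia.
Qed.

(* Take the smallest value of [val U_k - w k], and the largest index realising it. *)
Lemma rightmost_contact_exists (U : {poly K}) (w : nat -> R) : U != 0 ->
  exists mu t, rightmost_contact U (fun k => mu + w k) t.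
Proof.
move=> U0; have sz : (0 < size U)%N by rewrite size_poly_gt0.
pose F (k : 'I_(size U)) := vR R (val U`_k) - w k.
pose P (k : 'I_(size U)) := U`_k != 0.
have last_lt : ((size U).-1 < size U)%N by rewrite ltn_predL.
have Plast : P (Ordinal last_lt).
  by rewrite /P /= -lead_coefE lead_coef_eq0.
have [i0 Pi0 mini0] := arg_minP F Plast.
pose Q (k : 'I_(size U)) := P k && (F k == F i0).
have Qi0 : Q i0 by rewrite /Q Pi0 eqxx.
have [t /andP[Pt /eqP Ft] maxt] := arg_maxnP (fun k : 'I_(size U) => (k : nat)) Qi0.
exists (F i0), t; split.
- move=> k; case: (ltnP k (size U)) => hk; last by rewrite nth_default // (geR0 Hv).
  case: (eqVneq U`_k 0) => [->|nz]; first by rewrite (geR0 Hv).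
  have := mini0 (Ordinal hk) nz; rewrite /geR (ointR_vR R Hv) //= /F /=; lra.
- by rewrite (ointR_vR R Hv) //; congr Some; move: Ft; rewrite /F /=; lra.
- move=> k tk; case: (ltnP k (size U)) => hk; last by rewrite nth_default // (gtR0 Hv).
  case: (eqVneq U`_k 0) => [->|nz]; first by rewrite (gtR0 Hv).
  have := mini0 (Ordinal hk) nz; rewrite /gtR (ointR_vR R Hv) //= /F /= => h.
  case: (eqVneq (F (Ordinal hk)) (F i0)) => e.
    have := maxt (Ordinal hk); rewrite /Q /P /= nz e eqxx => /(_ isT).
    by rewrite leqNgt tk.
  have : F i0 < F (Ordinal hk) by rewrite lt_neqAle eq_sym e h.
  rewrite /F /=; lra.
Qed.

Lemma rightmost_contact_le U w w' t : rightmost_contact U w t -> w' t = w t ->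
  (forall k, U`_k != 0 -> w' k <= w k) -> rightmost_contact U w' t.
Proof.
move=> [ge eq gt] et le; split.
- move=> k; case: (eqVneq U`_k 0) => [->|nz]; first exact: (geR0 Hv).
  exact: geR_le (le k nz) (ge k).
- by rewrite et.
- move=> k tk; case: (eqVneq U`_k 0) => [->|nz]; first exact: (gtR0 Hv).
  exact: gtR_le (le k nz) (gt k tk).
Qed.

(* Two summands whose rightmost contacts with a common line are at different
   places cannot cancel each other below that line. *)
Lemma rightmost_contact_add U W lam mu1 mu2 s t :
  rightmost_contact U (line mu1 lam) s -> rightmost_contact W (line mu2 lam) t ->
  (s < t)%N -> exists k, ~~ gtR (line mu1 lam k) (val (U + W)`_k).
Proof.
move=> [U1 U2 U3] [W1 W2 W3] st.
case: (ltgtP mu2 mu1) => [lt|gt|eq].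
- exists t; have hs : gtR (line mu2 lam t) (val U`_t).
    by apply: geR_lt (U1 t); rewrite /line; lra.
  have := ointR_val_add Hv W2 hs; rewrite coefD addrC => /ointR_not_gtR; apply.
  by rewrite /line; lra.
- exists s; have hs : gtR (line mu1 lam s) (val W`_s).
    by apply: geR_lt (W1 s); rewrite /line; lra.
  by have := ointR_val_add Hv U2 hs; rewrite coefD => /ointR_not_gtR; apply.
- rewrite eq in W2; exists t; have := ointR_val_add Hv W2 (U3 t st).
  by rewrite coefD addrC => /ointR_not_gtR; apply.
Qed.

Lemma rightmost_contact_touch U lam mu mu' t k0 :
  rightmost_contact U (line mu lam) t ->
  (forall k, geR (line mu' lam k) (val U`_k)) ->
  ointR R (val U`_k0) = Some (line mu' lam k0) -> mu = mu' /\ (k0 <= t)%N.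
Proof.
move=> [U1 U2 U3] low e0.
have h1 := U1 k0; rewrite /geR e0 /line /= in h1.
have h2 := low t; rewrite /geR U2 /line /= in h2.
have emu : mu = mu' by lra.
split=> //; rewrite leqNgt; apply/negP => tk.
by have := U3 k0 tk; rewrite emu (negbTE (ointR_not_gtR e0 (lexx _))).
Qed.

Lemma rightmost_contact_uniq U lam mu1 mu2 t1 t2 :
  rightmost_contact U (line mu1 lam) t1 ->
  rightmost_contact U (line mu2 lam) t2 -> mu1 = mu2 /\ t1 = t2.
Proof.
move=> c1 c2; have [lo1 eq1 _] := c1; have [lo2 eq2 _] := c2.
have [e12 le21] := rightmost_contact_touch c1 lo2 eq2.
have [_ le12] := rightmost_contact_touch c2 lo1 eq1.
by split=> //; apply/eqP; rewrite eqn_leq le12 le21.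
Qed.

End RightmostContact.

Section ConvexOption.
Variable R : realFieldType.
Implicit Types (f g : R -> option R) (m : R).

Lemma ole_None (u : option R) : ole u None.
Proof. by case: u. Qed.

Lemma ole_anti (u w : option R) : ole u w -> ole w u -> u = w.
Proof.
by case: u => [a|]; case: w => [b|] //= h1 h2; congr Some; apply: le_anti; rewrite h1 h2.
Qed.

Lemma convex_chord m f x z y fx fy : convex_on m f ->
  0 <= x -> x <= z -> z <= y -> y <= m -> x < y -> f x = Some fx -> f y = Some fy ->
  exists fz, f z = Some fz /\ (y - x) * fz <= (y - z) * fx + (z - x) * fy.
Proof.
move=> cf h0 hxz hzy hym hxy Fx Fy.
have yx0 : 0 < y - x by rewrite subr_gt0.
pose t := (y - z) / (y - x).
have ht : t * x + (1 - t) * y = z by rewrite /t; field; rewrite lt0r_neq0.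
have t01 : 0 <= t <= 1.
  apply/andP; split; first by apply: divr_ge0; lra.
  by rewrite /t ler_pdivrMr // mul1r; lra.
have := cf (x, fx) (y, fy) t.
rewrite /epi /comb /= Fx Fy /= !lexx ht.
have -> : (0 <= x <= m) by apply/andP; split=> //; lra.
have -> : (0 <= y <= m) by apply/andP; split=> //; lra.
move=> /(_ (conj isT isT) (conj isT isT) t01) [_].
case Fz: (f z) => [fz|] //= hz; exists fz; split=> //.
have e1 : (y - x) * t = y - z by rewrite /t mulrC divfK ?lt0r_neq0.
have e2 : (y - x) * (1 - t) = z - x by rewrite mulrBr mulr1 e1; ring.
have h := ler_wpM2l (ltW yx0) hz.
suff <- : (y - x) * (t * fx + (1 - t) * fy) = (y - z) * fx + (z - x) * fy by [].
by rewrite mulrDr mulrA e1 mulrA e2.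
Qed.

Lemma convex_finite_between m f a x b ya yb : convex_on m f ->
  0 <= a -> a <= x -> x <= b -> b <= m -> f a = Some ya -> f b = Some yb ->
  exists y, f x = Some y.
Proof.
move=> cf a0 ax xb bm Fa Fb; case: (ltP a b) => ab.
  by have [fz [Fz _]] := convex_chord cf a0 ax xb bm ab Fa Fb; exists fz.
have -> : x = a by apply: le_anti; rewrite ax andbT; apply: le_trans xb ab.
by exists ya.
Qed.

Lemma convex_secant_below m f a ya yb z fz : convex_on m f -> 0 <= a -> a + 1 <= m ->
  f a = Some ya -> f (a + 1) = Some yb -> 0 <= z <= m -> (z <= a \/ a + 1 <= z) ->
  f z = Some fz -> ya + (yb - ya) * (z - a) <= fz.
Proof.
move=> cf a0 am Fa Fb /andP[z0 zm] side Fz.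
have a1 : a <= a + 1 by lra.
case: side => hz.
  case: (eqVneq z a) => [eza|nza].
    by move: Fz; rewrite eza Fa => -[<-]; rewrite subrr mulr0 addr0.
  have lt : z < a + 1 by lra.
  have [fa [Fa' h]] := convex_chord cf z0 hz a1 am lt Fz Fb.
  by move: Fa'; rewrite Fa => -[efa]; rewrite -efa in h; nra.
case: (eqVneq z (a + 1)) => [eza|nza].
  by move: Fz; rewrite eza Fb => -[<-]; lra.
have lt : a < z by lra.
have [fa [Fa' h]] := convex_chord cf a0 a1 hz zm lt Fa Fz.
by move: Fa'; rewrite Fb => -[efa]; rewrite -efa in h; nra.
Qed.

Lemma convex_on_affine m s c : convex_on m (fun x => Some (c + s * x)).
Proof.
move=> [p1 p2] [q1 q2] t [/= hp1 hp2] [/= hq1 hq2] /andP[t0 t1]; split.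
  rewrite /comb /=; move: hp1 hq1 => /andP[? ?] /andP[? ?].
  apply/andP; split; nra.
by rewrite /comb /=; move: hp2 hq2 => /= hp hq; nra.
Qed.

(* An extremal point lies on the graph: otherwise it is the midpoint of two
   points of the vertical half-line above the graph. *)
Lemma extremal_graph m f x y : extremal m f (x, y) -> f x = Some y.
Proof.
move=> [[/= hx hy] ext].
case Fx: (f x) hy => [z|] //= hz; congr Some; apply: le_anti; rewrite hz /=.
have := ext (x, z) (x, 2 * y - z) (1/2).
rewrite /epi /comb /= Fx /= hx lexx.
have -> : z <= 2 * y - z = true by apply/idP; lra.
have -> : ((0 : R) < 1 / 2) && ((1 / 2 : R) < 1) by apply/andP; split; lra.
have -> : ((1/2 : R) * x + (1 - 1/2) * x, 1/2 * z + (1 - 1/2) * (2 * y - z)) = (x, y).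
  by congr pair; field.
by move=> /(_ (conj isT isT) (conj isT isT) isT erefl) [] e; lra.
Qed.

End ConvexOption.

Section SupportingLines.
Variables (R : realFieldType) (m : nat) (v : nat -> option R).

Definition vfin k : R := odflt 0 (v k).

Lemma vfinE k : v k != None -> v k = Some (vfin k).
Proof. by rewrite /vfin; case: (v k). Qed.

Definition line_below (s c : R) :=
  forall k, (k <= m)%N -> ole (Some (c + s * k%:R)) (v k).

Definition secant_slope i j : R := (vfin j - vfin i) / (j%:R - i%:R).

Definition secant_at (x : R) i j : R :=
  ((j%:R - x) * vfin i + (x - i%:R) * vfin j) / (j%:R - i%:R).

Definition straddles (x : R) i j :=
  [&& (j <= m)%N, v i != None, v j != None, i%:R <= x & x < j%:R].

Lemma straddles_lt x i j : straddles x i j -> (i < j)%N.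
Proof. by case/and5P=> _ _ _ ix xj; rewrite -(ltr_nat R); apply: le_lt_trans ix xj. Qed.

(* A straddling chord with the lowest value at [x], and among those the least
   slope, supports the data: a datum below it would give a lower chord, or one
   of equal value and smaller slope. *)
Lemma secant_below_of_minimal x i j : straddles x i j ->
  (forall i' j', straddles x i' j' -> secant_at x i j <= secant_at x i' j') ->
  (forall i' j', straddles x i' j' -> secant_at x i' j' = secant_at x i j ->
     secant_slope i j <= secant_slope i' j') ->
  line_below (secant_slope i j) (vfin i - secant_slope i j * i%:R).
Proof.
move=> sij min1 min2; have ij := straddles_lt sij.
case/and5P: sij => jm ni nj ix xj.
have Dp : 0 < j%:R - i%:R :> R by rewrite subr_gt0 ltr_nat.
set s := secant_slope i j; set c := vfin i - s * i%:R.
have evi : vfin i = c + s * i%:R by rewrite /c; ring.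
have evj : vfin j = c + s * j%:R by rewrite /c /s /secant_slope; field; rewrite lt0r_neq0.
have emu : secant_at x i j = c + s * x.
  by rewrite /secant_at /c /s /secant_slope; field; rewrite lt0r_neq0.
move=> k km; case: (eqVneq (v k) None) => [->//|nk]; rewrite vfinE //=.
rewrite leNgt; apply/negP => lt.
case: (lerP k%:R x) => kx.
  have := min1 k j; rewrite /straddles jm nk nj kx xj emu /secant_at => /(_ isT).
  have Dk : 0 < j%:R - k%:R :> R by rewrite subr_gt0; apply: le_lt_trans kx xj.
  rewrite ler_pdivlMr // evj.
  have jx : 0 < j%:R - x by rewrite subr_gt0.
  by have h := lt; rewrite -(ltr_pM2l jx) in h; nra.
have sik : straddles x i k by rewrite /straddles km ni nk ix kx.
have Dk : 0 < k%:R - i%:R :> R by rewrite subr_gt0; apply: le_lt_trans ix kx.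
have h1 := min1 i k sik; move: (h1); rewrite emu /secant_at ler_pdivlMr // evi => h2.
have exi : x = i%:R.
  apply: le_anti; rewrite ix andbT leNgt; apply/negP => ltx.
  have p : 0 < x - i%:R by rewrite subr_gt0.
  by have h := lt; rewrite -(ltr_pM2l p) in h; nra.
have eqk : secant_at x i k = secant_at x i j.
  apply: le_anti; rewrite h1 andbT emu /secant_at ler_pdivrMr // exi evi; nra.
by have := min2 i k sik eqk; rewrite -/s /secant_slope ler_pdivlMr // evi; nra.
Qed.

Lemma chord_below_interior x k1 k2 : straddles x k1 k2 -> exists i j,
  straddles x i j /\ line_below (secant_slope i j) (vfin i - secant_slope i j * i%:R).
Proof.
move=> s12; pose T := ('I_m.+1 * 'I_m.+1)%type.
have inordE i' j' : straddles x i' j' ->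
    straddles x (inord i' : 'I_m.+1) (inord j' : 'I_m.+1) /\
    secant_at x (inord i' : 'I_m.+1) (inord j' : 'I_m.+1) = secant_at x i' j' /\
    secant_slope (inord i' : 'I_m.+1) (inord j' : 'I_m.+1) = secant_slope i' j'.
  move=> sij; have ij := straddles_lt sij; have jm : (j' <= m)%N by case/andP: sij.
  by rewrite !inordK ?ltnS // (leq_trans (ltnW ij)).
pose cand (p : T) := straddles x p.1 p.2.
have cp0 : cand (inord k1, inord k2) := proj1 (inordE _ _ s12).
have [pm cpm min1] := arg_minP (fun p : T => secant_at x p.1 p.2) cp0.
pose cand2 (p : T) := cand p && (secant_at x p.1 p.2 == secant_at x pm.1 pm.2).
have cpm2 : cand2 pm by rewrite /cand2 cpm eqxx.
have [[i j] c2 min2] := arg_minP (fun p : T => secant_slope p.1 p.2) cpm2.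
move: c2; rewrite /cand2 /cand /= => /andP[sij /eqP eij].
exists i, j; split=> //; apply: (secant_below_of_minimal sij) => i' j' sij'.
  by have [s' [<- _]] := inordE _ _ sij'; rewrite eij; apply: (min1 (inord i', inord j')).
have [s' [<- <-]] := inordE _ _ sij' => e; apply: (min2 (inord i', inord j')).
by rewrite /cand2 /cand s' /= e eij eqxx.
Qed.

(* At the last finite datum [hi], take the steepest chord ending at [hi]. *)
Lemma line_below_through_last hi : (hi <= m)%N -> v hi != None ->
  (forall k, (k <= m)%N -> v k != None -> (k <= hi)%N) ->
  exists s c, [/\ line_below s c, v hi = Some (c + s * hi%:R) &
    (exists2 i, (i < hi)%N & v i = Some (c + s * i%:R)) \/
    (forall k, (k <= m)%N -> v k != None -> k = hi)].
Proof.
move=> hhi nhi maxhi.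
case: (boolP [exists i : 'I_hi, v i != None]) => [/existsP[i0 ni0]|none].
- pose key3 (i : 'I_hi) := (vfin hi - vfin i) / (hi%:R - (i : nat)%:R).
  have [im nim max3] := arg_maxP key3 (P := fun i : 'I_hi => v i != None) ni0.
  have Dp : 0 < hi%:R - (im : nat)%:R :> R by rewrite subr_gt0 ltr_nat.
  set s := key3 im; pose c := vfin hi - s * hi%:R.
  have evi : vfin im = c + s * (im : nat)%:R.
    by rewrite /c /s /key3; field; rewrite lt0r_neq0.
  exists s, c; split; last by left; exists im; rewrite // vfinE // evi.
    move=> k km; case: (eqVneq (v k) None) => [->//|nk]; rewrite vfinE //=.
    have khi : (k <= hi)%N by apply: maxhi.
    case: (ltnP k hi) => [kh|hk].
      have Dk : 0 < hi%:R - k%:R :> R by rewrite subr_gt0 ltr_nat.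
      by have := max3 (Ordinal kh) nk; rewrite -/s /key3 /= ler_pdivrMr // /c; nra.
    have -> : k = hi by apply/eqP; rewrite eqn_leq khi hk.
    by rewrite /c; lra.
  by rewrite vfinE // /c; congr Some; ring.
- have only_hi k : (k <= m)%N -> v k != None -> k = hi.
    move=> km nk; have khi : (k <= hi)%N by apply: maxhi.
    case: (ltnP k hi) => [kh|hk]; last by apply/eqP; rewrite eqn_leq khi hk.
    by move/existsP: none; case; exists (Ordinal kh).
  exists 0, (vfin hi); split; last by right.
    move=> k km; case: (eqVneq (v k) None) => [->//|nk].
    by rewrite mul0r addr0 (only_hi k km nk) vfinE //=.
  by rewrite mul0r addr0 vfinE.
Qed.

Lemma hull_supporting_line x k1 k2 : (k1 <= m)%N -> (k2 <= m)%N ->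
  v k1 != None -> v k2 != None -> k1%:R <= x <= k2%:R ->
  exists s c, line_below s c /\ exists i j,
    [/\ (i <= m)%N, (j <= m)%N, (i%:R : R) <= x <= j%:R,
        v i = Some (c + s * i%:R) & v j = Some (c + s * j%:R)] /\
    ((i < j)%N \/ forall k, (k <= m)%N -> v k != None -> k = i).
Proof.
move=> hk1 hk2 nk1 nk2 /andP[xk1 xk2].
have exS : exists k, (k <= m)%N && (v k != None) by exists k2; rewrite hk2.
have ubS k : (k <= m)%N && (v k != None) -> (k <= m)%N by case/andP.
have [hi /andP[hhi nhi] maxhi] := ex_maxnP exS ubS.
have k2hi : (k2 <= hi)%N by apply: maxhi; rewrite hk2 nk2.
case: (ltP x hi%:R) => [xlt|xge].
  have s1hi : straddles x k1 hi by rewrite /straddles hhi nk1 nhi xk1 xlt.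
  have [i [j [sij hs]]] := chord_below_interior s1hi.
  have ij := straddles_lt sij; case/and5P: sij => jm ni nj ix xj.
  exists (secant_slope i j), (vfin i - secant_slope i j * i%:R); split=> //.
  exists i, j; split; [split|left] => //.
  - exact: leq_trans (ltnW ij) jm.
  - by rewrite ix ltW.
  - by rewrite vfinE //; congr Some; ring.
  - have Dn : j%:R - i%:R != 0 :> R by rewrite subr_eq0 eqr_nat gtn_eqF.
    by rewrite vfinE // /secant_slope; congr Some; field.
have exh : x = hi%:R.
  by apply: le_anti; rewrite xge andbT; apply: le_trans xk2 _; rewrite ler_nat.
have maxhi' k : (k <= m)%N -> v k != None -> (k <= hi)%N.
  by move=> km nk; apply: maxhi; rewrite km nk.
have [s [c [hs vhi [[i ih vi]|single]]]] := line_below_through_last hhi nhi maxhi'.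
  exists s, c; split=> //; exists i, hi; split; [split|left] => //.
  - exact: leq_trans (ltnW ih) hhi.
  - by rewrite exh lexx andbT ler_nat ltnW.
exists s, c; split=> //; exists hi, hi; split; [split|right] => //.
by rewrite exh lexx.
Qed.

Lemma finite_lower_bound (w : nat -> R) : exists d0, forall k, (k <= m)%N -> d0 <= w k.
Proof.
elim: m => [|m' [d IH]]; first by exists (w 0%N) => k; rewrite leqn0 => /eqP ->.
exists (Num.min d (w m'.+1)) => k; rewrite leq_eqVlt => /orP[/eqP ->|].
  by rewrite ge_min lexx orbT.
by rewrite ltnS => /IH h; rewrite ge_min h.
Qed.

Lemma line_below_left x y lo :
  (forall k, (k <= m)%N -> v k != None -> (lo <= k)%N) -> x < lo%:R ->
  exists s c, line_below s c /\ y < c + s * x.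
Proof.
move=> minlo xlo; have [d0 Hd0] := finite_lower_bound vfin.
pose M := (`|y - d0| + 1) / (lo%:R - x).
have Dp : 0 < lo%:R - x by rewrite subr_gt0.
have M0 : 0 <= M by rewrite /M divr_ge0 // ?ltW //; apply: ltr_wpDl.
have eM : M * (lo%:R - x) = `|y - d0| + 1 by rewrite /M divfK // lt0r_neq0.
have nrm := ler_norm (y - d0).
exists (- M), (d0 + M * lo%:R); split; last by nra.
move=> k km; case: (eqVneq (v k) None) => [->//|nk]; rewrite vfinE //=.
have := Hd0 k km; have := minlo k km nk; rewrite -(ler_nat R) => lok h; nra.
Qed.

Lemma line_below_right x y hi :
  (forall k, (k <= m)%N -> v k != None -> (k <= hi)%N) -> hi%:R < x ->
  exists s c, line_below s c /\ y < c + s * x.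
Proof.
move=> maxhi xhi; have [d0 Hd0] := finite_lower_bound vfin.
pose M := (`|y - d0| + 1) / (x - hi%:R).
have Dp : 0 < x - hi%:R by rewrite subr_gt0.
have M0 : 0 <= M by rewrite /M divr_ge0 // ?ltW //; apply: ltr_wpDl.
have eM : M * (x - hi%:R) = `|y - d0| + 1 by rewrite /M divfK // lt0r_neq0.
have nrm := ler_norm (y - d0).
exists M, (d0 - M * hi%:R); split; last by nra.
move=> k km; case: (eqVneq (v k) None) => [->//|nk]; rewrite vfinE //=.
have := Hd0 k km; have := maxhi k km nk; rewrite -(ler_nat R) => lok h; nra.
Qed.

End SupportingLines.

Section LowerHull.
Variable R : realFieldType.

(* [is_NF val Q f] is [lower_hull (size Q).-1 (fun i => ointR R (val Q`_i)) f]. *)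
Definition lower_hull (m : nat) (v : nat -> option R) (f : R -> option R) : Prop :=
  [/\ convex_on m%:R f,
      (forall i : nat, (i <= m)%N -> ole (f i%:R) (v i)) &
      (forall g : R -> option R, convex_on m%:R g ->
         (forall i : nat, (i <= m)%N -> ole (g i%:R) (v i)) ->
         forall x, 0 <= x <= m%:R -> ole (g x) (f x))].

Variables (m : nat) (v : nat -> option R) (f : R -> option R).
Hypothesis Hf : lower_hull m v f.

Lemma lower_hull_line_le s c : line_below m v s c ->
  forall x, 0 <= x <= m%:R -> ole (Some (c + s * x)) (f x).
Proof. by case: Hf => _ _ H hs; apply: H => //; apply: convex_on_affine. Qed.

Lemma lower_hull_finite_span x y : 0 <= x <= m%:R -> f x = Some y ->
  exists k1 k2, [/\ (k1 <= m)%N, (k2 <= m)%N, v k1 != None, v k2 != None &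
                    (k1%:R : R) <= x <= k2%:R].
Proof.
move=> hx Fx.
have under s c : line_below m v s c -> c + s * x <= y.
  by move=> hs; have := lower_hull_line_le hs hx; rewrite Fx.
case: (boolP [exists k : 'I_m.+1, v k != None]) => [/existsP[k0 nk0]|none]; last first.
  suff : y + 1 <= y by lra.
  have := under 0 (y + 1); rewrite mul0r addr0; apply=> k km.
  case: (eqVneq (v k) None) => [->//|nk]; move/existsP: none; case.
  by exists (Ordinal (km : (k < m.+1)%N)).
have exS : exists k, (k <= m)%N && (v k != None).
  by exists k0; rewrite nk0 -ltnS ltn_ord.
have ubS k : (k <= m)%N && (v k != None) -> (k <= m)%N by case/andP.
have [lo /andP[lom nlo] minlo] := ex_minnP exS.
have [hi /andP[him nhi] maxhi] := ex_maxnP exS ubS.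
exists lo, hi; split=> //; apply/andP; split; rewrite leNgt; apply/negP => out.
  have minlo' k : (k <= m)%N -> v k != None -> (lo <= k)%N.
    by move=> km nk; apply: minlo; rewrite km nk.
  by have [s [c [hs lt]]] := line_below_left y minlo' out; have := under s c hs; lra.
have maxhi' k : (k <= m)%N -> v k != None -> (k <= hi)%N.
  by move=> km nk; apply: maxhi; rewrite km nk.
by have [s [c [hs lt]]] := line_below_right y maxhi' out; have := under s c hs; lra.
Qed.

Lemma lower_hull_supporting_line x y : 0 <= x <= m%:R -> f x = Some y ->
  exists s c, line_below m v s c /\ y = c + s * x /\
   exists i j, [/\ (i <= m)%N, (j <= m)%N, (i%:R : R) <= x <= j%:R,
     v i = Some (c + s * i%:R) & v j = Some (c + s * j%:R)].
Proof.
move=> hx Fx.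
have [k1 [k2 [h1 h2 n1 n2 hx12]]] := lower_hull_finite_span hx Fx.
have [s [c [hs [i [j [[im jm hij vi vj] dis]]]]]] := hull_supporting_line h1 h2 n1 n2 hx12.
exists s, c; split=> //; split; last by exists i, j; split.
have := lower_hull_line_le hs hx; rewrite Fx /= => le1.
apply: le_anti; rewrite le1 andbT.
case: Hf => cf Hle _.
have := Hle i im; rewrite vi; case Fi: (f i%:R) => [fi|] //= hfi.
have := Hle j jm; rewrite vj; case Fj: (f j%:R) => [fj|] //= hfj.
case/andP: hij => ix xj.
case: dis => [ltij|single].
  have ltr : (i%:R : R) < j%:R by rewrite ltr_nat.
  have jm' : (j%:R : R) <= m%:R by rewrite ler_nat.
  have [fz [Fz hz]] := convex_chord cf (ler0n _ _) ix xj jm' ltr Fi Fj.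
  move: Fz; rewrite Fx => -[->].
  have Dp : 0 < (j%:R : R) - i%:R by rewrite subr_gt0.
  rewrite -(ler_pM2l Dp); apply: le_trans hz _.
  have : 0 <= j%:R - x by rewrite subr_ge0.
  have : 0 <= x - i%:R by rewrite subr_ge0.
  nra.
have ji : j = i by apply: single => //; rewrite vj.
have ex : x = i%:R by apply: le_anti; rewrite ix andbT; rewrite ji in xj.
by move: Fi; rewrite -ex Fx => -[->]; rewrite ex.
Qed.

(* The supporting line at [z] touches the data on both sides of [z]; our line is
   below it there and meets it at [z], hence meets it at those contacts. *)
Lemma lower_hull_contacts s c z : line_below m v s c ->
  0 <= z <= m%:R -> f z = Some (c + s * z) ->
  (exists k, [/\ (k <= m)%N, k%:R <= z & v k = Some (c + s * k%:R)]) /\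
  (exists k, [/\ (k <= m)%N, z <= k%:R & v k = Some (c + s * k%:R)]).
Proof.
move=> hs hz Fz.
have [s2 [c2 [hs2 [e2 [i [j [im jm /andP[iz zj] vi vj]]]]]]] := lower_hull_supporting_line hz Fz.
have := hs i im; rewrite vi /= => li.
have := hs j jm; rewrite vj /= => lj.
case: (eqVneq z i%:R) => [ezi|nzi].
  have onl : v i = Some (c + s * i%:R) by rewrite vi -ezi -e2.
  by split; exists i; split=> //; rewrite ezi.
case: (eqVneq z j%:R) => [ezj|nzj].
  have onl : v j = Some (c + s * j%:R) by rewrite vj -ezj -e2.
  by split; exists j; split=> //; rewrite ezj.
have iz' : i%:R < z by rewrite lt_neqAle eq_sym nzi iz.
have zj' : z < j%:R by rewrite lt_neqAle nzj zj.
set A := c2 + s2 * i%:R - (c + s * i%:R).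
set B := c2 + s2 * j%:R - (c + s * j%:R).
have A0 : 0 <= A by rewrite subr_ge0.
have B0 : 0 <= B by rewrite subr_ge0.
have eq0 : (j%:R - z) * A + (z - i%:R) * B = 0 by rewrite /A /B; nra.
have p1 : 0 <= (j%:R - z) * A by apply: mulr_ge0 => //; rewrite subr_ge0.
have p2 : 0 <= (z - i%:R) * B by apply: mulr_ge0 => //; rewrite subr_ge0.
have eA : (j%:R - z) * A = 0 by lra.
have eB : (z - i%:R) * B = 0 by lra.
move/eqP: eA; rewrite mulf_eq0 subr_eq0 eq_sym (negbTE nzj) /= subr_eq0 => /eqP eA.
move/eqP: eB; rewrite mulf_eq0 subr_eq0 (negbTE nzi) /= subr_eq0 => /eqP eB.
split.
  by exists i; split=> //; rewrite vi eA.
by exists j; split=> //; rewrite vj eB.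
Qed.

Lemma lower_hull_epi_on_line s c q r t : line_below m v s c ->
  epi m%:R f q -> epi m%:R f r -> 0 < t < 1 ->
  (comb t q r).2 = c + s * (comb t q r).1 -> f q.1 = Some (c + s * q.1) /\ q.2 = c + s * q.1.
Proof.
case: q r => [q1 q2] [r1 r2] hs [/= hq1 hq2] [/= hr1 hr2] /andP[t0 t1] /= e.
have below z w : 0 <= z <= m%:R -> ole (f z) (Some w) -> c + s * z <= w.
  by move=> hz; have := lower_hull_line_le hs hz; case: (f z) => //= a; apply: le_trans.
have lq := below _ _ hq1 hq2; have lr := below _ _ hr1 hr2.
have eq1 : q2 = c + s * q1.
  have p2 : 0 <= (1 - t) * (r2 - (c + s * r1)) by apply: mulr_ge0; lra.
  have : t * (q2 - (c + s * q1)) = 0.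
    apply: le_anti; rewrite mulr_ge0 ?andbT; [nra | lra | lra].
  by move/eqP; rewrite mulf_eq0 gt_eqF //= subr_eq0 => /eqP.
split=> //; have := lower_hull_line_le hs hq1; case: (f q1) hq2 => //= a h1 h2.
by congr Some; apply: le_anti; rewrite h2 -eq1 h1.
Qed.

Lemma comb_swap (t : R) p q : comb t p q = comb (1 - t) q p.
Proof. by rewrite /comb; congr pair; ring. Qed.

(* A chord of the epigraph through the point lies on the line, and its ends
   would give contacts with the data on both sides of [i]. *)
Lemma lower_hull_extremal s c i : line_below m v s c ->
  (i <= m)%N -> v i = Some (c + s * i%:R) ->
  ((forall k, (k < i)%N -> v k != Some (c + s * k%:R)) \/
   (forall k, (i < k)%N -> (k <= m)%N -> v k != Some (c + s * k%:R))) ->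
  extremal m%:R f (i%:R, c + s * i%:R).
Proof.
move=> hs im vi side; case: (Hf) => cf Hle _.
split; first by split; rewrite /= ?ler0n ?ler_nat // -vi; apply: Hle.
move=> q r t hq hr t01 e.
have t01' : 0 < 1 - t < 1 by case/andP: t01 => ? ?; apply/andP; split; lra.
have e' := e; rewrite comb_swap in e'.
have [Fq eq] : f q.1 = Some (c + s * q.1) /\ q.2 = c + s * q.1.
  by apply: (lower_hull_epi_on_line hs hq hr t01); rewrite -e.
have [Fr er] : f r.1 = Some (c + s * r.1) /\ r.2 = c + s * r.1.
  by apply: (lower_hull_epi_on_line hs hr hq t01'); rewrite -e'.
case: (eqVneq q.1 r.1) => [eqr|neq].
  by apply: injective_projections; rewrite // eq er eqr.
exfalso.
have no_left z : 0 <= z <= m%:R -> z < i%:R -> f z = Some (c + s * z) ->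
    exists2 k, (k < i)%N & v k = Some (c + s * k%:R).
  move=> hz zi Fz; have [[k [km kz vk]] _] := lower_hull_contacts hs hz Fz.
  by exists k => //; rewrite -(ltr_nat R); apply: le_lt_trans kz zi.
have no_right z : 0 <= z <= m%:R -> i%:R < z -> f z = Some (c + s * z) ->
    exists k, [/\ (i < k)%N, (k <= m)%N & v k = Some (c + s * k%:R)].
  move=> hz zi Fz; have [_ [k [km kz vk]]] := lower_hull_contacts hs hz Fz.
  by exists k; split=> //; rewrite -(ltr_nat R); apply: lt_le_trans zi kz.
case: hq hr => hq1 _ [hr1 _]; case/andP: t01 => t0 t1.
have ti : i%:R = t * q.1 + (1 - t) * r.1 by rewrite [LHS](f_equal fst e).
have [z1 [z2 [[hz1 Fz1] [hz2 Fz2] /andP[lt1 lt2]]]] : exists z1 z2,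
    [/\ 0 <= z1 <= m%:R /\ f z1 = Some (c + s * z1),
        0 <= z2 <= m%:R /\ f z2 = Some (c + s * z2) & z1 < i%:R < z2].
  case: (ltP q.1 r.1) => qr.
    by exists q.1, r.1; split=> //; apply/andP; split; rewrite ti; nra.
  have rq : r.1 < q.1 by rewrite lt_neqAle eq_sym neq qr.
  by exists r.1, q.1; split=> //; apply/andP; split; rewrite ti; nra.
case: side => [L|Rr].
  by have [k ki vk] := no_left z1 hz1 lt1 Fz1; move: (L k ki); rewrite vk eqxx.
by have [k [ki km vk]] := no_right z2 hz2 lt2 Fz2; move: (Rr k ki km); rewrite vk eqxx.
Qed.

Lemma lower_hull_extremal_ends s c x i j : line_below m v s c ->
  (i <= m)%N -> (j <= m)%N -> (i%:R : R) <= x <= j%:R ->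
  v i = Some (c + s * i%:R) -> v j = Some (c + s * j%:R) ->
  exists i' j', [/\ (i'%:R : R) <= x <= j'%:R, (j' <= m)%N,
    v i' = Some (c + s * i'%:R) /\ extremal m%:R f (i'%:R, c + s * i'%:R) &
    v j' = Some (c + s * j'%:R) /\ extremal m%:R f (j'%:R, c + s * j'%:R)].
Proof.
move=> hs im jm /andP[ix xj] vi vj.
pose P k := (k <= m)%N && (v k == Some (c + s * k%:R)).
have exP : exists k, P k by exists i; rewrite /P im vi eqxx.
have ubP k : P k -> (k <= m)%N by case/andP.
have [i' /andP[i'm /eqP vi'] mini] := ex_minnP exP.
have [j' /andP[j'm /eqP vj'] maxj] := ex_maxnP exP ubP.
exists i', j'; split=> //; last 2 first.
- split=> //; apply: lower_hull_extremal => //; left=> k ki; apply/negP => /eqP vk.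
  have : (i' <= k)%N by apply: mini; rewrite /P vk eqxx andbT (leq_trans (ltnW ki)).
  by rewrite leqNgt ki.
- split=> //; apply: lower_hull_extremal => //; right=> k kj km; apply/negP => /eqP vk.
  have : (k <= j')%N by apply: maxj; rewrite /P vk eqxx km.
  by rewrite leqNgt kj.
apply/andP; split.
  by apply: le_trans ix; rewrite ler_nat; apply: mini; rewrite /P im vi eqxx.
by apply: le_trans xj _; rewrite ler_nat; apply: maxj; rewrite /P jm vj eqxx.
Qed.

Lemma lower_hull_greatest_at_extremal g : convex_on m%:R g ->
  (forall k y, (k <= m)%N -> v k = Some y -> extremal m%:R f (k%:R, y) ->
     ole (g k%:R) (Some y)) ->
  (forall x, 0 <= x <= m%:R -> f x = None -> g x = None) ->
  forall x, 0 <= x <= m%:R -> ole (g x) (f x).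
Proof.
move=> cg Hext Hnone x hx.
case Fx: (f x) => [y|]; last by rewrite (Hnone x hx Fx).
have [s [c [hs [ey [i [j [im jm hij vi vj]]]]]]] := lower_hull_supporting_line hx Fx.
have [i' [j' [/andP[xi' xj'] j'm [vi' exi] [vj' exj]]]] :=
  lower_hull_extremal_ends hs im jm hij vi vj.
have i'm : (i' <= m)%N by rewrite -(ler_nat R); apply: le_trans xi' (le_trans xj' _); rewrite ler_nat.
case Gi: (g i'%:R) (Hext _ _ i'm vi' exi) => [gi|] //= hgi.
case Gj: (g j'%:R) (Hext _ _ j'm vj' exj) => [gj|] //= hgj.
case: (ltnP i' j') => lij.
  have ltr : (i'%:R : R) < j'%:R by rewrite ltr_nat.
  have j'm' : (j'%:R : R) <= m%:R by rewrite ler_nat.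
  have [gz [Gz hz]] := convex_chord cg (ler0n _ _) xi' xj' j'm' ltr Gi Gj.
  rewrite Gz /= ey.
  have Dp : 0 < (j'%:R : R) - i'%:R by rewrite subr_gt0.
  rewrite -(ler_pM2l Dp); apply: le_trans hz _.
  have : 0 <= j'%:R - x by rewrite subr_ge0.
  have : 0 <= x - i'%:R by rewrite subr_ge0.
  nra.
have ex : x = i'%:R.
  by apply: le_anti; rewrite xi' andbT; apply: le_trans xj' _; rewrite ler_nat.
by rewrite ex Gi /= ey ex.
Qed.

End LowerHull.

Section HullConstruction.
Variables (R : realFieldType) (m : nat) (v : nat -> option R).
Variables (lo hi : nat).

Let T := ('I_m.+1 * 'I_m.+1)%type.

Definition chord_icpt (p : T) : R := vfin v p.1 - secant_slope v p.1 p.2 * (p.1 : nat)%:R.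

Definition chord_below_data (p : T) := [&& v p.1 != None, v p.2 != None, (p.1 < p.2)%N &
  [forall k : 'I_m.+1, (v k != None) ==> (chord_icpt p + secant_slope v p.1 p.2 * (k : nat)%:R <= vfin v k)]].

Definition data_min : R := \big[Order.min/vfin v hi]_(k < m.+1 | v k != None) vfin v k.

Definition hull_piece (p : T) (x : R) : R :=
  if chord_below_data p then chord_icpt p + secant_slope v p.1 p.2 * x else data_min.

Definition hull_fun (x : R) : option R :=
  if (lo%:R <= x) && (x <= hi%:R) then Some (\big[Order.max/data_min]_(p : T) hull_piece p x)
  else None.

Lemma data_min_le i : (i <= m)%N -> v i != None -> data_min <= vfin v i.
Proof.
move=> im ni.
have := @bigmin_le_cond _ _ _ (vfin v hi) (inord i) (fun k : 'I_m.+1 => v k != None)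
  (fun k : 'I_m.+1 => vfin v k).
by rewrite inordK ?ltnS //; apply.
Qed.

Lemma hull_piece_line s c i j : line_below m v s c -> (i < j <= m)%N ->
  v i = Some (c + s * i%:R) -> v j = Some (c + s * j%:R) ->
  forall x, hull_piece (inord i, inord j) x = c + s * x.
Proof.
move=> hs /andP[ij jm] vi vj x.
have im : (i < m.+1)%N by rewrite ltnS (leq_trans (ltnW ij)).
have ni : v i != None by rewrite vi.
have nj : v j != None by rewrite vj.
have Dn : (j%:R : R) - i%:R != 0 by rewrite subr_eq0 eqr_nat gtn_eqF.
have vi' : vfin v i = c + s * i%:R by rewrite /vfin vi.
have vj' : vfin v j = c + s * j%:R by rewrite /vfin vj.
have esl : secant_slope v i j = s by rewrite /secant_slope vi' vj'; field.
have ecc : chord_icpt (inord i, inord j) = c.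
  by rewrite /chord_icpt /= !inordK ?ltnS // esl vi'; ring.
suff gp : chord_below_data (inord i, inord j).
  by rewrite /hull_piece gp ecc /= !inordK ?ltnS // esl.
rewrite /chord_below_data /= !inordK ?ltnS // ni nj ij /=.
apply/forallP => k; apply/implyP => nk.
by rewrite esl ecc; have := hs k (ltn_ord k); rewrite (vfinE nk).
Qed.

Lemma hull_fun_convex : convex_on m%:R hull_fun.
Proof.
have LA p t a b : hull_piece p (t * a + (1 - t) * b) = t * hull_piece p a + (1 - t) * hull_piece p b.
  by rewrite /hull_piece; case: (chord_below_data p); ring.
have Mge x : data_min <= \big[Order.max/data_min]_(p : T) hull_piece p x.
  exact: bigmax_ge_id.
have Lle p x : hull_piece p x <= \big[Order.max/data_min]_(p : T) hull_piece p x.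
  exact: le_bigmax.
move=> [p1 p2] [q1 q2] t [/= hp1 hp2] [/= hq1 hq2] /andP[t0 t1].
rewrite /hull_fun in hp2 hq2.
case: ifP hp2 => // /andP[lp hp] /= hp2.
case: ifP hq2 => // /andP[lq hq] /= hq2.
split; rewrite /comb /=.
  by move: hp1 hq1 => /andP[? ?] /andP[? ?]; apply/andP; split; nra.
rewrite /hull_fun.
have -> : (lo%:R <= t * p1 + (1 - t) * q1) && (t * p1 + (1 - t) * q1 <= hi%:R).
  by apply/andP; split; nra.
rewrite /=; apply: le_trans (_ : t * (\big[Order.max/data_min]_(p : T) hull_piece p p1)
  + (1 - t) * (\big[Order.max/data_min]_(p : T) hull_piece p q1) <= _); last by nra.
apply: bigmax_le => [|p _].
  by have := Mge p1; have := Mge q1; nra.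
by rewrite LA; have := Lle p p1; have := Lle p q1; nra.
Qed.

Lemma hull_fun_le_data :
  (forall k, (k <= m)%N -> v k != None -> (lo <= k <= hi)%N) ->
  forall i, (i <= m)%N -> ole (hull_fun i%:R) (v i).
Proof.
move=> span i im; case: (eqVneq (v i) None) => [->|ni]; first exact: ole_None.
have /andP[loi ihi] := span i im ni.
rewrite /hull_fun !ler_nat loi ihi /= (vfinE ni) /=.
apply: bigmax_le => [|p _]; first exact: data_min_le.
rewrite /hull_piece; case: ifP => gp; last exact: data_min_le.
case/and4P: gp => _ _ _ /forallP /(_ (inord i)).
by rewrite inordK ?ltnS // ni.
Qed.

Lemma hull_fun_greatest g : (lo <= m)%N -> (hi <= m)%N -> v lo != None -> v hi != None ->
  convex_on m%:R g -> (forall i, (i <= m)%N -> ole (g i%:R) (v i)) ->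
  forall x, 0 <= x <= m%:R -> ole (g x) (hull_fun x).
Proof.
move=> lom him nlo nhi cg Hg x /andP[x0 xm].
rewrite /hull_fun; case: ifP => [/andP[lx xh]|_]; last exact: ole_None.
have [s [c [hs [i [j [[im jm /andP[ix xj] vi vj] dis]]]]]] :=
  hull_supporting_line lom him nlo nhi (introT andP (conj lx xh)).
have := Hg i im; rewrite vi; case Gi: (g i%:R) => [gi|] //= hgi.
have := Hg j jm; rewrite vj; case Gj: (g j%:R) => [gj|] //= hgj.
case: dis => [lij|single].
  have ltr : (i%:R : R) < j%:R by rewrite ltr_nat.
  have jm' : (j%:R : R) <= m%:R by rewrite ler_nat.
  have [gz [Gz hz]] := convex_chord cg (ler0n _ _) ix xj jm' ltr Gi Gj.
  have Lle p : hull_piece p x <= \big[Order.max/data_min]_(p : T) hull_piece p x.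
    exact: le_bigmax.
  rewrite Gz /=; apply: le_trans (Lle (inord i, inord j)).
  rewrite (hull_piece_line hs _ vi vj) ?lij //.
  have Dp : 0 < (j%:R : R) - i%:R by rewrite subr_gt0.
  rewrite -(ler_pM2l Dp); apply: le_trans hz _.
  have : 0 <= j%:R - x by rewrite subr_ge0.
  have : 0 <= x - i%:R by rewrite subr_ge0.
  nra.
have ex : x = i%:R.
  by apply: le_anti; rewrite -{1}(single hi) // xh -(single lo) // lx.
have Mge : data_min <= \big[Order.max/data_min]_(p : T) hull_piece p x.
  exact: bigmax_ge_id.
move: Gi; rewrite -ex => ->; apply: le_trans hgi (le_trans _ Mge).
apply: le_bigmin; first by rewrite (single hi) // /vfin vi.
by move=> k nk; rewrite (single k (ltn_ord k) nk) /vfin vi.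
Qed.

End HullConstruction.

Lemma lower_hull_exists (R : realFieldType) (m : nat) (v : nat -> option R) :
  (exists k, (k <= m)%N /\ v k != None) -> exists f, lower_hull m v f.
Proof.
move=> [k0 [k0m nk0]].
have exS : exists k, (k <= m)%N && (v k != None) by exists k0; rewrite k0m.
have ubS k : (k <= m)%N && (v k != None) -> (k <= m)%N by case/andP.
have [lo /andP[lom nlo] minlo] := ex_minnP exS.
have [hi /andP[him nhi] maxhi] := ex_maxnP exS ubS.
have span k : (k <= m)%N -> v k != None -> (lo <= k <= hi)%N.
  by move=> km nk; rewrite minlo ?maxhi ?km.
exists (hull_fun m v lo hi); split.
- exact: hull_fun_convex.
- exact: hull_fun_le_data.
- by move=> g; apply: hull_fun_greatest.
Qed.

Section Perturbation.
Variables (K : fieldType) (val : K -> option int) (R : realFieldType)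
  (n d : nat) (Papp dP : {poly K}) (fapp phiP : R -> option R).
Hypothesis Hv : is_cdvf val.
Hypothesis HszP : size Papp = n.+1.
Hypothesis Hdn : (d < n)%N.
Hypothesis HNF : is_NF val Papp fapp.
Hypothesis Hge : forall x, 0 <= x <= n.-1%:R -> ole (fapp x) (phiP x).
Hypothesis Hnd : forall p, extremal n%:R fapp p -> p.1 <= n.-1%:R -> olt (Some p.2) (phiP p.1).
Hypothesis HszdP : (size dP <= n)%N.
Hypothesis HdP : forall i : nat, (i <= n.-1)%N -> ole (phiP i%:R) (@ointR R (val dP`_i)).

Definition vcoef (Q : {poly K}) (i : nat) : option R := ointR R (val Q`_i).

Lemma fapp_hull : lower_hull n (vcoef Papp) fapp.
Proof. by move: HNF; rewrite /is_NF HszP. Qed.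

Lemma fapp_convex : convex_on n%:R fapp.
Proof. by case: fapp_hull. Qed.

Lemma size_perturbed : size (Papp + dP) = n.+1.
Proof. by rewrite size_addl HszP // ltnS. Qed.

Lemma leq_predn k : (k <= n.-1)%N = (k < n)%N.
Proof. by move: Hdn; case: n. Qed.

Lemma dP_coef_high k : (n <= k)%N -> dP`_k = 0.
Proof. by move=> h; rewrite nth_default //; apply: leq_trans HszdP h. Qed.

Lemma natr_in_range k : (k < n)%N -> 0 <= (k%:R : R) <= n.-1%:R.
Proof. by move=> h; rewrite ler0n ler_nat leq_predn. Qed.

Lemma coef_fapp_None k : (k <= n)%N -> fapp k%:R = None -> Papp`_k = 0 /\ dP`_k = 0.
Proof.
move=> kn Fk; case: fapp_hull => _ Hle _.
have := Hle k kn; rewrite Fk /vcoef; case E: (ointR R (val Papp`_k)) => //= _.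
split; first by move/ointR_None/(val_eq0 Hv): E.
case: (ltnP k n) => kn'; last exact: dP_coef_high.
have := Hge (natr_in_range kn'); rewrite Fk; case Ep: (phiP k%:R) => //= _.
have := HdP (i := k); rewrite leq_predn => /(_ kn'); rewrite Ep.
by case Ed: (ointR R (val dP`_k)) => //= _; move/ointR_None/(val_eq0 Hv): Ed.
Qed.

Lemma coef_fapp_Some k y : (k <= n)%N -> fapp k%:R = Some y ->
  geR y (val Papp`_k) /\ geR y (val dP`_k).
Proof.
move=> kn Fk; case: fapp_hull => _ Hle _.
have := Hle k kn; rewrite Fk /vcoef => h; split; first exact: h.
case: (ltnP k n) => kn'; last by rewrite dP_coef_high // (geR0 Hv).
have h1 := Hge (natr_in_range kn'); rewrite Fk in h1.
have := HdP (i := k); rewrite leq_predn => /(_ kn').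
exact: ole_geR.
Qed.

Lemma dP_gt_vertex k y : extremal n%:R fapp (k%:R, y) -> gtR y (val dP`_k).
Proof.
move=> ext; case: (ltnP k n) => kn; last by rewrite dP_coef_high // (gtR0 Hv).
have := Hnd ext; case/andP: (natr_in_range kn) => _ h /(_ h) /=.
have := HdP (i := k); rewrite leq_predn => /(_ kn).
rewrite /gtR; case: (phiP k%:R) => [p|] //=; case: (ointR R (val dP`_k)) => //= a.
by move=> h1 h2; apply: lt_le_trans h2 h1.
Qed.

Lemma newton_perturbed fP : is_NF val (Papp + dP) fP ->
  forall x, 0 <= x <= n%:R -> fP x = fapp x.
Proof.
move=> HP x hx.
have HfPP : lower_hull n (vcoef (Papp + dP)) fP by move: HP; rewrite /is_NF size_perturbed.
case: (HfPP) => cP leP grP.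
have finite_of_coef k : (k <= n)%N -> vcoef (Papp + dP) k != None ->
    exists y, fapp k%:R = Some y.
  move=> kn nk; case Fk: (fapp k%:R) => [y|]; first by exists y.
  have [e1 e2] := coef_fapp_None kn Fk.
  by move: nk; rewrite /vcoef coefD e1 e2 addr0 (val0 Hv).
apply: ole_anti.
- apply: (lower_hull_greatest_at_extremal fapp_hull cP) => //.
  + move=> k y kn vk ext; have := leP k kn.
    by rewrite /vcoef coefD (ointR_val_add Hv vk (dP_gt_vertex ext)).
  + move=> z hz Fz; case FPz: (fP z) => [w|] //; exfalso.
    have [k1 [k2 [k1n k2n n1 n2 /andP[z1 z2]]]] := lower_hull_finite_span HfPP hz FPz.
    have [y1 F1] := finite_of_coef _ k1n n1.
    have [y2 F2] := finite_of_coef _ k2n n2.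
    have k2m : (k2%:R : R) <= n%:R by rewrite ler_nat.
    have [y Fy] := convex_finite_between fapp_convex (ler0n _ _) z1 z2 k2m F1 F2.
    by rewrite Fy in Fz.
- apply: grP => // [|i im]; first exact: fapp_convex.
  case Fi: (fapp i%:R) => [y|].
    have [h1 h2] := coef_fapp_Some im Fi.
    by rewrite /vcoef coefD; apply: (geR_add Hv).
  have [e1 e2] := coef_fapp_None im Fi.
  by rewrite /vcoef coefD e1 e2 addr0 (val0 Hv).
Qed.

Lemma fapp_secant_below a ya yb k z : (a < n)%N ->
  fapp a%:R = Some ya -> fapp a.+1%:R = Some yb ->
  (k <= n)%N -> fapp k%:R = Some z -> ya + (yb - ya) * (k%:R - a%:R) <= z.
Proof.
move=> an Fa Fb kn Fk.
apply: (convex_secant_below fapp_convex (ler0n _ _) _ Fa _ _ _ Fk).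
- by rewrite natr1 ler_nat.
- by rewrite natr1.
- by rewrite ler0n ler_nat.
- by case: (leqP k a) => h; [left; rewrite ler_nat | right; rewrite natr1 ler_nat].
Qed.

Lemma monic_coef_size (X : {poly K}) m : X \is monic -> size X = m.+1 -> X`_m = 1.
Proof. by move/monicP; rewrite lead_coefE => h sz; rewrite sz in h. Qed.

Lemma fapp_finite_pred_d j Fd : (j < d)%N -> Papp`_j != 0 -> fapp d%:R = Some Fd ->
  exists y0, fapp d.-1%:R = Some y0.
Proof.
move=> jd nz HFd; have jn : (j <= n)%N by rewrite ltnW // (ltn_trans jd).
case: fapp_hull => _ Hle _; have := Hle j jn; rewrite /vcoef (ointR_vR R Hv nz).
case Fj: (fapp j%:R) => [yj|] //= _.
apply: (convex_finite_between fapp_convex (ler0n _ j) _ _ _ Fj HFd);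
  by rewrite ler_nat ?leq_pred ?(ltnW Hdn) // -ltnS (ltn_predK jd).
Qed.

Section Divisors.
Variables (A Aapp : {poly K}) (Fd y0 delta : R).
Hypothesis Hd0 : (0 < d)%N.
Hypothesis HFd : fapp d%:R = Some Fd.
Hypothesis HvPd : ointR R (val Papp`_d) = Some Fd.
Hypothesis Hvertex : extremal n%:R fapp (d%:R, Fd).
Hypothesis HFd1 : fapp d.-1%:R = Some y0.
Hypothesis Hdel : forall x b, 0 <= x <= n.-1%:R -> phi_ext fapp d x = Some b ->
  ole (Some (b + delta)) (phiP x).

Let lam0 := Fd - y0.

Definition NF_divisor (X : {poly K}) :=
  [/\ X \is monic, size X = d.+1 &
      forall fX, is_NF val X fX ->
        forall x, 0 <= x <= d%:R -> fX x = osub (fapp x) (odflt 0 (fapp d%:R))].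

Hypothesis HA : NF_divisor A.
Hypothesis HAdvd : A %| Papp + dP.
Hypothesis HB : NF_divisor Aapp.
Hypothesis HBdvd : Aapp %| Papp.

Lemma natr_predd : (d.-1%:R : R) = d%:R - 1.
Proof. by rewrite -[in RHS](prednK Hd0) -natr1 addrK. Qed.

Lemma fapp_above_left_slope k z : (k <= n)%N -> fapp k%:R = Some z ->
  Fd + lam0 * (k%:R - d%:R) <= z.
Proof.
move=> kn Fk.
have an : (d.-1 < n)%N by apply: leq_ltn_trans Hdn; apply: leq_pred.
have Fb : fapp d.-1.+1%:R = Some Fd by rewrite prednK.
by have := fapp_secant_below an HFd1 Fb kn Fk; rewrite natr_predd /lam0; nra.
Qed.

Lemma fapp_above_left_slope_strict k z : (d < k)%N -> (k <= n)%N ->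
  fapp k%:R = Some z -> Fd + lam0 * (k%:R - d%:R) < z.
Proof.
move=> dk kn Fk.
rewrite lt_neqAle (fapp_above_left_slope kn Fk) andbT; apply/negP => /eqP ez.
case: Hvertex => _ ext.
have kd : (d%:R : R) < k%:R by rewrite ltr_nat.
pose t := (k%:R - d%:R) / (k%:R - d%:R + 1) : R.
have D : 0 < (k%:R : R) - d%:R + 1 by lra.
have t01 : 0 < t < 1.
  apply/andP; split; first by rewrite /t divr_gt0 // subr_gt0.
  by rewrite /t ltr_pdivrMr // mul1r; lra.
have ep1 : epi n%:R fapp (d.-1%:R, y0).
  split; last by rewrite /= HFd1 /=.
  by rewrite /= ler0n ler_nat; apply: leq_trans (leq_pred _) (ltnW Hdn).
have ep2 : epi n%:R fapp (k%:R, z).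
  by split; [rewrite /= ler0n ler_nat | rewrite /= Fk /=].
have ec : (d%:R, Fd) = comb t (d.-1%:R, y0) (k%:R, z).
  by rewrite /comb /= natr_predd -ez /t /lam0; congr pair; field; rewrite lt0r_neq0.
have [] := ext _ _ _ ep1 ep2 t01 ec; rewrite natr_predd; lra.
Qed.

Lemma perturbed_contact :
  rightmost_contact val (Papp + dP) (line (Fd - lam0 * d%:R) lam0) d.
Proof.
rewrite /line; split.
- move=> k; case: (ltnP n k) => kn.
    by rewrite nth_default ?(geR0 Hv) // size_perturbed.
  case Fk: (fapp k%:R) => [z|].
    have [h1 h2] := coef_fapp_Some kn Fk.
    rewrite coefD; apply: (geR_le _ (geR_add Hv h1 h2)).
    by have := fapp_above_left_slope kn Fk; nra.
  by have [e1 e2] := coef_fapp_None kn Fk; rewrite coefD e1 e2 addr0 (geR0 Hv).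
- have -> : Fd - lam0 * d%:R + lam0 * d%:R = Fd by ring.
  by rewrite coefD; apply: (ointR_val_add Hv) => //; apply: dP_gt_vertex.
- move=> k dk; case: (ltnP n k) => kn.
    by rewrite nth_default ?(gtR0 Hv) // size_perturbed.
  case Fk: (fapp k%:R) => [z|].
    have [h1 h2] := coef_fapp_Some kn Fk.
    rewrite coefD; apply: (geR_lt _ (geR_add Hv h1 h2)).
    by have := fapp_above_left_slope_strict dk kn Fk; nra.
  by have [e1 e2] := coef_fapp_None kn Fk; rewrite coefD e1 e2 addr0 (gtR0 Hv).
Qed.

Lemma divisor_hull X : NF_divisor X ->
  exists fX, lower_hull d (vcoef X) fX /\ forall x, 0 <= x <= d%:R -> fX x = osub (fapp x) Fd.
Proof.
move=> [mon sz HX].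
have [fX HfX] : exists fX, lower_hull d (vcoef X) fX.
  apply: lower_hull_exists; exists d; split=> //.
  by rewrite /vcoef monic_coef_size // (val1 Hv).
exists fX; split=> // x hx.
by rewrite (HX fX _ x hx) ?HFd //; rewrite /is_NF sz.
Qed.

Lemma divisor_coef_ge X k : NF_divisor X -> (k <= d)%N ->
  ole (osub (fapp k%:R) Fd) (vcoef X k).
Proof.
move=> HX kd; have [fX [[_ Hle _] eX]] := divisor_hull HX.
by rewrite -eX ?Hle // ler0n ler_nat.
Qed.

Lemma divisor_coef_high X k : NF_divisor X -> (d < k)%N -> X`_k = 0.
Proof. by case=> _ sz _ h; rewrite nth_default // sz. Qed.

Lemma divisor_contact X : NF_divisor X ->
  rightmost_contact val X (line (- (lam0 * d%:R)) lam0) d.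
Proof.
move=> HX; rewrite /line; split.
- move=> k; case: (leqP k d) => kd; last by rewrite divisor_coef_high // (geR0 Hv).
  have := divisor_coef_ge HX kd; rewrite /vcoef.
  case Fk: (fapp k%:R) => [z|] /=; last by rewrite /geR; case: (ointR R (val X`_k)).
  rewrite /geR; case: (ointR R (val X`_k)) => //= a h; apply: le_trans h.
  have kn : (k <= n)%N by apply: leq_trans kd (ltnW Hdn).
  by have := fapp_above_left_slope kn Fk; nra.
- by case: HX => mon sz _; rewrite monic_coef_size // (val1 Hv) /=; congr Some; ring.
- by move=> k dk; rewrite divisor_coef_high // (gtR0 Hv).
Qed.

(* Comparing the contacts of [A * B] and of [Papp + dP] along [lam0] puts the
   contact of [B] at [0] with value [Fd]; a smaller slope keeps it there. *)
Lemma cofactor_contact lam : lam <= lam0 ->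
  rightmost_contact val ((Papp + dP) %/ A) (line Fd lam) 0.
Proof.
move=> lamle; set B := (Papp + dP) %/ A.
have PBA : Papp + dP = B * A by apply/eqP; rewrite -dvdp_eq.
have B0 : B != 0.
  by apply/eqP => B0; have := size_perturbed; rewrite PBA B0 mul0r size_poly0.
have [muB [tB pB]] := rightmost_contact_exists Hv (fun k => lam0 * k%:R) B0.
have pAB := rightmost_contactM Hv (divisor_contact HA) pB.
rewrite mulrC -PBA in pAB.
have [e1 e2] := rightmost_contact_uniq pAB perturbed_contact.
have tB0 : tB = 0%N by lia.
have muBe : muB = Fd by lra.
rewrite tB0 in pB.
case: pB => [p1 p2 p3]; rewrite /line; split.
- by move=> k; apply: geR_le (p1 k); have : (0 : R) <= k%:R by []; nra.
- by rewrite p2 muBe !mulr0.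
- by move=> k kp; apply: gtR_le (p3 k kp); have : (0 : R) <= k%:R by []; nra.
Qed.

Lemma phi_ext_le k : (k <= d)%N -> phi_ext fapp d k%:R = fapp k%:R.
Proof. by move=> kd; rewrite /phi_ext ler_nat kd. Qed.

Lemma phi_ext_gt k : (d < k)%N -> phi_ext fapp d k%:R = Some (lam0 * (k%:R - d%:R) + Fd).
Proof. by move=> dk; rewrite /phi_ext ler_nat leqNgt dk /= HFd HFd1. Qed.

Lemma fapp_finite_between a b ya : (a <= b <= d)%N -> fapp a%:R = Some ya ->
  exists y, fapp b%:R = Some y.
Proof.
move=> /andP[ab bd] Fa.
by apply: (convex_finite_between fapp_convex (ler0n _ a) _ _ _ Fa HFd);
  rewrite ler_nat ?(ltnW Hdn).
Qed.

Lemma secant_slope_le s ys y1 : (s < d)%N ->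
  fapp s%:R = Some ys -> fapp s.+1%:R = Some y1 -> y1 - ys <= lam0.
Proof.
move=> sd Fs F1; case: (ltngtP s.+1 d) => [lt|ds|eq]; last first.
  have ey1 : y1 = Fd by move: F1; rewrite eq HFd => -[].
  have eys : ys = y0 by move: HFd1; rewrite -eq /= Fs => -[].
  by rewrite ey1 eys /lam0.
  by rewrite ltnS leqNgt sd in ds.
have sn : (s < n)%N by apply: ltn_trans Hdn.
have h1 := fapp_secant_below sn Fs F1 (leq_trans (leq_pred _) (ltnW Hdn)) HFd1.
have h2 := fapp_above_left_slope (ltnW sn) Fs.
have D : (s%:R : R) + 1 < d%:R by rewrite natr1 ltr_nat.
by rewrite natr_predd in h1; rewrite /lam0 in h2 *; nra.
Qed.

(* [phiP] exceeds [phi] by [delta], while the line stays less than [delta]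
   above [phi] (on [[d, n]] because [lam <= lam0]). *)
Lemma dP_above_line c s ys lam : c < delta -> lam <= lam0 -> (s <= d)%N ->
  (forall k z, (k <= n)%N -> fapp k%:R = Some z -> ys + lam * (k%:R - s%:R) <= z) ->
  forall k, gtR (line (c + ys - lam * s%:R) lam k) (val dP`_k).
Proof.
move=> cd lamle sd secant k; rewrite /line.
case: (leqP n k) => kn; first by rewrite dP_coef_high // (gtR0 Hv).
have hk := natr_in_range kn.
have hdP := HdP (i := k); rewrite leq_predn in hdP; have {}hdP := hdP kn.
case: (leqP k d) => kd.
  case Fk: (fapp k%:R) => [z|]; last first.
    by have [_ ->] := coef_fapp_None (ltnW kn) Fk; rewrite (gtR0 Hv).
  have hd := Hdel hk; rewrite phi_ext_le // Fk in hd.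
  apply: (geR_lt _ (ole_geR (hd _ erefl) hdP)).
  by have := secant k z (ltnW kn) Fk; lra.
apply: (geR_lt _ (ole_geR (Hdel hk (phi_ext_gt kd)) hdP)).
have h2 := secant d Fd (ltnW Hdn) HFd.
have kd' : (d%:R : R) < k%:R by rewrite ltr_nat.
have : lam * (k%:R - d%:R) <= lam0 * (k%:R - d%:R).
  by apply: ler_wpM2r => //; rewrite subr_ge0 ltW.
lra.
Qed.

Lemma diff_coef_high k : (d <= k)%N -> (A - Aapp)`_k = 0.
Proof.
move=> dk; rewrite coefB; case: (ltngtP k d) dk => // [dk|->] _.
  by rewrite !divisor_coef_high // subrr.
by case: HA => ? ? _; case: HB => ? ? _; rewrite !monic_coef_size // subrr.
Qed.

Lemma diff_coef_fapp_None k : (k <= d)%N -> fapp k%:R = None -> (A - Aapp)`_k = 0.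
Proof.
move=> kd Fk; have := divisor_coef_ge HA kd; have := divisor_coef_ge HB kd.
rewrite Fk /vcoef /=.
case eA: (ointR R (val A`_k)) => //; case eB: (ointR R (val Aapp`_k)) => // _ _.
rewrite coefB; move/ointR_None/(val_eq0 Hv): eA => ->.
by move/ointR_None/(val_eq0 Hv): eB => ->; rewrite subrr.
Qed.

Lemma diff_excess i y : (i < d)%N -> fapp i%:R = Some y ->
  ~~ geR (y - (Fd - delta)) (val (A - Aapp)`_i) ->
  exists m0 s ys, [/\ m0 < delta, (s < d)%N, fapp s%:R = Some ys &
    rightmost_contact val (A - Aapp) (fun k => m0 + (odflt 0 (fapp k%:R) - Fd)) s].
Proof.
move=> id Fi viol.
have Ei0 : (A - Aapp)`_i != 0 by apply: contra viol => /eqP ->; rewrite (geR0 Hv).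
have E0 : A - Aapp != 0 by apply: contraNneq Ei0 => ->; rewrite coef0.
have [m0 [s cE]] := rightmost_contact_exists Hv (fun k => odflt 0 (fapp k%:R) - Fd) E0.
have [c1 c2 _] := cE.
have Es0 : (A - Aapp)`_s != 0 by apply/eqP => E0s; move: c2; rewrite E0s (val0 Hv).
have sd : (s < d)%N by rewrite ltnNge; apply: contra Es0 => /diff_coef_high ->.
case Fs: (fapp s%:R) => [ys|]; last by rewrite diff_coef_fapp_None ?eqxx // ltnW in Es0.
exists m0, s, ys; split=> //.
have := c1 i; move: viol; rewrite Fi /geR /=.
by case: (ointR R (val (A - Aapp)`_i)) => //= a; rewrite -ltNge; lra.
Qed.

(* The Newton polygon of a divisor [X] contains the edge of [fapp - Fd] through
   [s] and [s + 1], so its rightmost contact with that slope lies beyond [s]. *)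
Lemma divisor_contact_beyond X s ys y1 : NF_divisor X -> (s < d)%N ->
  fapp s%:R = Some ys -> fapp s.+1%:R = Some y1 ->
  exists t, rightmost_contact val X (line (ys - Fd - (y1 - ys) * s%:R) (y1 - ys)) t /\
            (s < t)%N.
Proof.
move=> HX sd Fs F1; set lam := y1 - ys; set mus := ys - Fd - lam * s%:R.
have sn : (s < n)%N by apply: ltn_trans Hdn.
have lowX k : geR (line mus lam k) (val X`_k).
  case: (leqP k d) => kd; last by rewrite divisor_coef_high // (geR0 Hv).
  have := divisor_coef_ge HX kd; rewrite /vcoef.
  case Fk: (fapp k%:R) => [z|] /=; last by rewrite /geR; case: (ointR R (val X`_k)).
  rewrite /geR; case: (ointR R (val X`_k)) => //= a h; apply: le_trans h.
  have := fapp_secant_below sn Fs F1 (leq_trans kd (ltnW Hdn)) Fk.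
  by rewrite /line /mus /lam; lra.
have [fX [HfX eX]] := divisor_hull HX.
have hz : 0 <= (s.+1%:R : R) <= d%:R by rewrite ler0n ler_nat.
have FXz : fX s.+1%:R = Some (mus + lam * s.+1%:R).
  by rewrite eX // F1 /= /mus /lam -natr1; congr Some; ring.
have [_ [k0 [k0d zk0 vk0]]] := lower_hull_contacts HfX (fun k _ => lowX k) hz FXz.
have X0 : X != 0 by case: HX => mon _ _; apply: monic_neq0.
have [mu [t cX]] := rightmost_contact_exists Hv (fun k => lam * k%:R) X0.
have [emu k0t] := rightmost_contact_touch cX lowX vk0.
exists t; rewrite -emu; split=> //.
by apply: leq_trans k0t; rewrite -(ler_nat R).
Qed.

Lemma divisor_perturbation_bound i : (i < d)%N ->
  ole (osub (phi_ext fapp d i%:R) (odflt 0 (phi_ext fapp d d%:R) - delta))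
      (ointR R (val (A - Aapp)`_i)).
Proof.
move=> id; rewrite !phi_ext_le ?(ltnW id) // HFd.
case Fi: (fapp i%:R) => [y|]; last by rewrite diff_coef_fapp_None ?(ltnW id) // (val0 Hv).
change (geR (y - (Fd - delta)) (val (A - Aapp)`_i)).
apply/negPn/negP => /(diff_excess id Fi) [m0 [s [ys [m0d sd Fs cE]]]].
have [y1 F1] : exists y1, fapp s.+1%:R = Some y1.
  by apply: fapp_finite_between Fs; rewrite leqnSn.
set lam := y1 - ys.
have sn : (s < n)%N by apply: ltn_trans Hdn.
have secant k z : (k <= n)%N -> fapp k%:R = Some z -> ys + lam * (k%:R - s%:R) <= z.
  exact: fapp_secant_below sn Fs F1.
have lamle : lam <= lam0 := secant_slope_le sd Fs F1.
have cE' : rightmost_contact val (A - Aapp) (line (m0 + ys - Fd - lam * s%:R) lam) s.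
  apply: (rightmost_contact_le Hv cE); first by rewrite /line Fs /=; ring.
  move=> k nz.
  have kd : (k < d)%N by rewrite ltnNge; apply: contra nz => /diff_coef_high ->.
  case Fk: (fapp k%:R) => [z|] /=; last by rewrite diff_coef_fapp_None ?eqxx ?(ltnW kd) in nz.
  have kn : (k <= n)%N by rewrite (leq_trans (ltnW kd) (ltnW Hdn)).
  by have := secant k z kn Fk; rewrite /line; lra.
pose B := (Papp + dP) %/ A; pose Bapp := Papp %/ Aapp.
have cEB := rightmost_contactM Hv cE' (cofactor_contact lamle : rightmost_contact val B _ _).
have [t [cA st]] := divisor_contact_beyond HB sd Fs F1.
have dP_split : dP = (A - Aapp) * B + Aapp * (B - Bapp).
  have PBA : Papp + dP = B * A by apply/eqP; rewrite -dvdp_eq.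
  have PBB : Papp = Bapp * Aapp by apply/eqP; rewrite -dvdp_eq.
  by apply/(addrI Papp); rewrite PBA {1}PBB; ring.
have dPgt := dP_above_line m0d lamle (ltnW sd) secant.
rewrite (_ : m0 + ys - Fd - lam * s%:R + Fd = m0 + ys - lam * s%:R) ?addn0 in cEB;
  last by ring.
case: (eqVneq (B - Bapp) 0) => [C0|C0].
  case: cEB => _ eq _; move: (dPgt s); rewrite dP_split C0 mulr0 addr0.
  by rewrite (negbTE (ointR_not_gtR eq (lexx _))).
have [muC [tC cC]] := rightmost_contact_exists Hv (fun k => lam * k%:R) C0.
have [k] := rightmost_contact_add Hv cEB (rightmost_contactM Hv cA cC)
  (leq_trans st (leq_addr _ _)).
by rewrite -dP_split (dPgt k).
Qed.

End Divisors.

End Perturbation.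

Unset Implicit Arguments. Set Strict Implicit.

Theorem proposition4p6
  (K : fieldType) (val : K -> option int) (R : realFieldType)
  (n d : nat) (Papp dP A Aapp : {poly K})
  (fapp phiP : R -> option R) (delta : R) :
  is_cdvf val ->
  Papp \is monic -> size Papp = n.+1 ->
  (0 < d)%N -> (d < n)%N ->
  is_NF val Papp fapp ->
  (exists v : int, val Papp`_d = Some v /\ extremal n%:R fapp (d%:R, v%:~R)) ->
  (exists j : nat, (j < d)%N /\ Papp`_j != 0) ->
  newton_function n.-1 phiP ->
  (forall x, 0 <= x <= n.-1%:R -> ole (fapp x) (phiP x)) ->
  (forall p, extremal n%:R fapp p -> p.1 <= n.-1%:R -> olt (Some p.2) (phiP p.1)) ->
  (* delta = min_{x in [0,n-1]} (phiP x - phi x) (as an infimum) *)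
  (forall x b, 0 <= x <= n.-1%:R -> phi_ext fapp d x = Some b ->
     ole (Some (b + delta)) (phiP x)) ->
  (forall eps : R, 0 < eps -> exists x, 0 <= x <= n.-1%:R /\
     exists a b, phiP x = Some a /\ phi_ext fapp d x = Some b /\ a - b < delta + eps) ->
  0 < delta ->
  (size dP <= n)%N ->
  (forall i : nat, (i <= n.-1)%N -> ole (phiP i%:R) (@ointR R (val dP`_i))) ->
  A \is monic -> size A = d.+1 -> A %| Papp + dP ->
  (forall fA : R -> option R, is_NF val A fA ->
     forall x, 0 <= x <= d%:R -> fA x = osub (fapp x) (odflt 0 (fapp d%:R))) ->
  Aapp \is monic -> size Aapp = d.+1 -> Aapp %| Papp ->
  (forall fA : R -> option R, is_NF val Aapp fA ->
     forall x, 0 <= x <= d%:R -> fA x = osub (fapp x) (odflt 0 (fapp d%:R))) ->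
  (forall fP : R -> option R, is_NF val (Papp + dP) fP ->
     forall x, 0 <= x <= n%:R -> fP x = fapp x)
  /\
  (forall i : nat, (i < d)%N ->
     ole (osub (phi_ext fapp d i%:R) (odflt 0 (phi_ext fapp d d%:R) - delta))
         (@ointR R (val (A - Aapp)`_i))).
Proof.
(* Only the lower margin [delta] of [phiP] over [phi] is used: neither the
   Newton-function shape of [phiP], nor the infimum property or positivity of
   [delta], nor the monicity of [Papp]. *)
move=> Hv _ HszP Hd0 Hdn HNF [v [vd ext]] [j [jd nzj]] _ Hge Hnd Hdel _ _ HszdP HdP
  HAm HAs HAdvd HAN HBm HBs HBdvd HBN.
split=> [fP|]; first exact: newton_perturbed Hv HszP Hdn HNF Hge Hnd HszdP HdP fP.
have HFd := extremal_graph ext.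
have HvPd : ointR R (val Papp`_d) = Some v%:~R by rewrite vd.
have [y0 HFd1] := fapp_finite_pred_d Hv HszP Hdn HNF jd nzj HFd.
have HA : NF_divisor val d fapp A by split.
have HB : NF_divisor val d fapp Aapp by split.
move=> i id; exact (divisor_perturbation_bound Hv HszP Hdn HNF Hge Hnd HszdP HdP Hd0 HFd HvPd
  ext HFd1 Hdel HA HAdvd HB HBdvd id).
Qed.
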